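(* For every integer $s$, the polynomial $F_s(t)= t^4 + (4s^3 - 4s^2 + 8s - 4)t^3 + (-6s^2 - 6)t^2 + 4t + 1$ is irreducible in $\mathbb{Q}[t]$. *)

From HB Require Import structures.
From mathcomp Require Import all_boot all_order all_algebra.
Set Implicit Arguments. Unset Strict Implicit. Unset Printing Implicit Defensive.
Import Order.TTheory GRing.Theory Num.Theory.
Local Open Scope ring_scope.

Definition Fs (s : int) : {poly rat} :=
  let q : rat := s%:~R in
  'X^4 + ((4 * q ^+ 3 - 4 * q ^+ 2 + 8 * q - 4)%:P) * 'X^3
       + ((- 6 * q ^+ 2 - 6)%:P) * 'X^2 + 4%:P * 'X + 1.

(* Clearing denominators (Gauss's lemma), it suffices to rule out factorisations
   of F_s over Z.  F_s is monic with constant term 1, so a linear factor would give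
   a root 1 or -1, and F_s(1), F_s(-1) are cubics in s with no integer zero.  A
   factorisation into two quadratics can be normalised to
   (t^2 + u t + e)(t^2 + v t + e) with e = 1 or -1; comparing the coefficients of t
   and t^3 forces 4 s^3 - 4 s^2 + 8 s - 4 = 4 e, i.e. s = 1 or s = 0, and then
   (u - v)^2 would have to be 72 or 32, which are not squares. *)

From mathcomp Require Import all_boot all_order all_algebra.
From mathcomp Require Import zify ring.

Set Implicit Arguments.
Unset Strict Implicit.
Unset Printing Implicit Defensive.
Import Order.TTheory GRing.Theory Num.Theory.
Local Open Scope ring_scope.

Lemma int_unitP (x : int) : x \is a GRing.unit -> x = 1 \/ x = -1.
Proof. by rewrite qualifE /= => /orP[]/eqP->; [left|right]. Qed.

Lemma int_mul_eq1 (c d : int) : c * d = 1 -> d = c /\ (c = 1 \/ c = -1).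
Proof.
move=> cd1; have c_unit : c \is a GRing.unit by apply/unitrPr; exists d.
by have [cE|cE] := int_unitP c_unit; move: cd1; rewrite cE; lia.
Qed.

Lemma sqr_neq_between (x k m : int) :
  0 <= k -> k ^+ 2 < m < (k + 1) ^+ 2 -> x ^+ 2 != m.
Proof.
move=> k_ge0 /andP[lo hi]; apply/eqP => x2E.
by have [x_small|x_large] := lerP `|x| k; nia.
Qed.

Lemma root_pm1_of_linear_factor (q p r : {poly int}) :
    q = p * r -> size p = 2%N ->
    lead_coef q \is a GRing.unit -> q`_0 \is a GRing.unit ->
  root q 1 \/ root q (-1).
Proof.
move=> qE sp lq_unit q0_unit.
have [p1_unit p0_unit] : p`_1 \is a GRing.unit /\ p`_0 \is a GRing.unit.
  move: lq_unit q0_unit; rewrite qE lead_coefM coef0M !unitrM lead_coefE sp.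
  by move=> /andP[-> _] /andP[-> _].
have root_p : root p (- p`_0 * p`_1).
  rewrite /root horner_coef sp !big_ord_recr big_ord0 /=.
  by case: (int_unitP p1_unit) (int_unitP p0_unit) => -> [] ->.
have x_unit : - p`_0 * p`_1 \is a GRing.unit by rewrite unitrM unitrN p0_unit.
by rewrite qE !rootM; case: (int_unitP x_unit) root_p => <- ->; [left|right].
Qed.

Lemma coefM_quadratics (R : nzRingType) (p r : {poly R}) :
    (size p <= 3)%N -> (size r <= 3)%N ->
  [/\ (p * r)`_1 = p`_0 * r`_1 + p`_1 * r`_0,
      (p * r)`_2 = p`_0 * r`_2 + p`_1 * r`_1 + p`_2 * r`_0 &
      (p * r)`_3 = p`_1 * r`_2 + p`_2 * r`_1].
Proof.
move=> sp sr; have p3 : p`_3 = 0 by rewrite nth_default.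
have r3 : r`_3 = 0 by rewrite nth_default.
by rewrite !coefM !big_ord_recr !big_ord0 /= !subSS !subn0 p3 r3 mul0r mulr0 !add0r addr0.
Qed.

Lemma irreducible_rat_of_int_factors (q : {poly int}) :
    (1 < size q)%N ->
    (forall p r : {poly int}, q = p * r -> (size p == 1%N) || (size r == 1%N)) ->
  irreducible_poly (map_poly intr q : {poly rat}).
Proof.
move=> q_gt1 q_factor; split; first by rewrite size_rat_int_poly.
move=> d d_ncst /dvdpP_rat_int [p [a a_neq0 dE] [r qE]].
have size_d : size d = size p by rewrite dE size_scale // size_rat_int_poly.
have [p_neq0 r_neq0] : p != 0 /\ r != 0.
  by apply/andP; rewrite -negb_or -mulf_eq0 -qE -size_poly_eq0; case: size q_gt1.
have r_const : size r = 1%N.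
  by apply/eqP; have := q_factor _ _ qE; rewrite -size_d (negbTE d_ncst).
rewrite -dvdp_size_eqp; last by rewrite dE dvdpZl // qE rmorphM dvdp_mulr.
by rewrite size_d size_rat_int_poly qE size_mul // r_const addn1.
Qed.

Definition quartic (a b c : int) : {poly int} :=
  'X^4 + a%:P * 'X^3 + b%:P * 'X^2 + c%:P * 'X + 1.

Lemma quartic_Poly a b c : quartic a b c = Poly [:: 1; c; b; a; 1].
Proof.
apply/polyP => i; rewrite coef_Poly /quartic !coefE.
by case: i => [|[|[|[|[|i]]]]] /=; rewrite ?nth_nil; ring.
Qed.

Lemma size_quartic a b c : size (quartic a b c) = 5%N.
Proof. by rewrite quartic_Poly (@PolyK _ 0) //= oner_eq0. Qed.

Lemma lead_coef_quartic a b c : lead_coef (quartic a b c) = 1.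
Proof. by rewrite lead_coefE size_quartic quartic_Poly coef_Poly. Qed.

Lemma quartic_coef0 a b c : (quartic a b c)`_0 = 1.
Proof. by rewrite quartic_Poly coef_Poly. Qed.

Lemma root_quartic a b c x :
  root (quartic a b c) x = (x ^+ 4 + a * x ^+ 3 + b * x ^+ 2 + c * x + 1 == 0).
Proof. by rewrite /root /quartic !hornerE. Qed.

Lemma quartic_factor_sizes a b c (p r : {poly int}) :
    quartic a b c = p * r -> size p != 1%N -> size r != 1%N ->
  [\/ size p = 2%N, size r = 2%N | size p = 3%N /\ size r = 3%N].
Proof.
move=> qE sp1 sr1.
have /andP[p_neq0 r_neq0] : (p != 0) && (r != 0).
  by rewrite -negb_or -mulf_eq0 -qE -size_poly_eq0 size_quartic.
have size_pr : (size p + size r).-1 = 5%N by rewrite -size_mul // -qE size_quartic.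
have [sp_gt0 sr_gt0] : (0 < size p)%N /\ (0 < size r)%N by rewrite !size_poly_gt0.
have [sp2|[sp3|sp4]] : size p = 2%N \/ size p = 3%N \/ size p = 4%N by lia.
- exact: Or31.
- by apply: Or33; split; lia.
- by apply: Or32; lia.
Qed.

(* The witnesses describe the factorisation (X^2 + u X + e) (X^2 + v X + e)
   obtained by scaling both factors by their common leading coefficient. *)
Lemma quartic_quadratic_factor a b c (p r : {poly int}) :
    quartic a b c = p * r -> size p = 3%N -> size r = 3%N ->
  exists e u v, [/\ e = 1 \/ e = -1, u + v = a, c = e * a & u * v = b - 2 * e].
Proof.
move=> qE sp sr.
have [r2E p2E] : r`_2 = p`_2 /\ (p`_2 = 1 \/ p`_2 = -1).
  apply: int_mul_eq1; move: (lead_coef_quartic a b c).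
  by rewrite qE lead_coefM !lead_coefE sp sr.
have [r0E p0E] : r`_0 = p`_0 /\ (p`_0 = 1 \/ p`_0 = -1).
  by apply: int_mul_eq1; rewrite -coef0M -qE quartic_coef0.
exists (p`_0 * p`_2), (p`_2 * p`_1), (p`_2 * r`_1).
move: (coefM_quadratics (eq_leq sp) (eq_leq sr)).
rewrite -qE quartic_Poly !coef_Poly /= r2E r0E.
case: p0E p2E => -> [] -> [-> -> ->].
all: by split; [left + right | ring..].
Qed.

Section IntegerModel.
Variable s : int.

Definition Fs_coef3 := 4 * s ^+ 3 - 4 * s ^+ 2 + 8 * s - 4.
Definition Fs_coef2 := - 6 * s ^+ 2 - 6.
Definition Fz := quartic Fs_coef3 Fs_coef2 4.

Lemma Fs_Fz : Fs s = map_poly intr Fz.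
Proof.
apply/polyP => i; rewrite /Fz quartic_Poly coef_map coef_Poly /Fs !coefE.
by case: i => [|[|[|[|[|i]]]]] /=; rewrite ?nth_nil /Fs_coef3 /Fs_coef2 ?rmorph0 //; ring.
Qed.

Lemma Fz_root1 : ~~ root Fz 1.
Proof.
rewrite root_quartic /Fs_coef3 /Fs_coef2; apply/eqP.
have : s <= 0 \/ s = 1 \/ s = 2 \/ 3 <= s by lia.
by case=> [|[|[|]]] s_range; try subst; nia.
Qed.

Lemma Fz_rootN1 : ~~ root Fz (-1).
Proof.
rewrite root_quartic /Fs_coef3 /Fs_coef2; apply/eqP.
by have [s_ge0|s_lt0] := lerP 0 s; nia.
Qed.

Lemma Fz_no_linear_factor (p r : {poly int}) :
  Fz = p * r -> size p = 2%N -> False.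
Proof.
move=> Fz_pr sp.
have lead_unit : lead_coef Fz \is a GRing.unit by rewrite lead_coef_quartic unitr1.
have const_unit : Fz`_0 \is a GRing.unit by rewrite quartic_coef0 unitr1.
have [] := root_pm1_of_linear_factor Fz_pr sp lead_unit const_unit.
- exact: (negP Fz_root1).
- exact: (negP Fz_rootN1).
Qed.

Lemma Fz_no_quadratic_factor (p r : {poly int}) :
  Fz = p * r -> size p = 3%N -> size r = 3%N -> False.
Proof.
move=> Fz_pr sp sr.
have [e [u [v [[]-> uvE c3E uvM]]]] := quartic_quadratic_factor Fz_pr sp sr.
all: move: uvE c3E uvM; rewrite /Fs_coef3 /Fs_coef2 => uvE c3E uvM.
- have s1 : s = 1 by nia.
  rewrite s1 in uvE uvM.
  have /eqP[] : (u - v) ^+ 2 != 72 by apply: (@sqr_neq_between _ 8).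
  nia.
- have s0 : s = 0 by nia.
  rewrite s0 in uvE uvM.
  have /eqP[] : (u - v) ^+ 2 != 32 by apply: (@sqr_neq_between _ 5).
  nia.
Qed.

Lemma Fz_factor_const (p r : {poly int}) :
  Fz = p * r -> (size p == 1%N) || (size r == 1%N).
Proof.
move=> Fz_pr; apply/negPn/negP; rewrite negb_or => /andP[sp1 sr1].
have [sp2|sr2|[sp3 sr3]] := quartic_factor_sizes Fz_pr sp1 sr1.
- exact: Fz_no_linear_factor Fz_pr sp2.
- by apply: (Fz_no_linear_factor (_ : Fz = r * p) sr2); rewrite mulrC.
- exact: Fz_no_quadratic_factor Fz_pr sp3 sr3.
Qed.

End IntegerModel.

Theorem mainTheorem4 (s : int) : irreducible_poly (Fs s).
Proof.
rewrite Fs_Fz; apply: irreducible_rat_of_int_factors; last exact: Fz_factor_const.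
by rewrite size_quartic.
Qed.
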